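(* Let $n\ge 2$ and $r\ge1$ an integer. (i) There exist $A,B\in\mathrm{SGL}_n(\mathbb{F}_2)$ and linearly independent $\mathbf{x}_1,\ldots,\mathbf{x}_r\in\mathbb{F}_2^n$ with $B-A=\sum_{i=1}^r\mathbf{x}_i\mathbf{x}_i^{\top}$ and $\mathbf{x}_i^{\top}A^{-1}\mathbf{x}_j=1$ for all $i,j$ if and only if $r$ is even and $r\le\lfloor\frac{n+1}{2}\rfloor$. (ii) There exist $A,B\in\mathrm{SGL}_n(\mathbb{F}_2)$ and linearly independent $\mathbf{x}_1,\ldots,\mathbf{x}_r$ with $B-A=\sum_{i=1}^r\mathbf{x}_i\mathbf{x}_i^{\top}$, $\mathbf{x}_i^{\top}A^{-1}\mathbf{x}_i=1$ for all $i$, and $\mathbf{x}_i^{\top}A^{-1}\mathbf{x}_j=0$ for some $i,j$, if and only if $r\in\{1,\ldots,n\}\setminus\{2\}$ is even. (iii) There exist $A,B\in\mathrm{SGL}_n(\mathbb{F}_2)$ and linearly independent $\mathbf{x}_1,\ldots,\mathbf{x}_r$ with $B-A=\sum_{i=1}^r\mathbf{x}_i\mathbf{x}_i^{\top}$ and $[\mathbf{x}_i^{\top}A^{-1}\mathbf{x}_j]_{i,j=1}^r$ of rank one and trace zero if and only if $r\in\{2,3,\ldots,\lfloor\frac{n+1}{2}\rfloor\}$. (iv) For each $r\in\{1,\ldots,n\}$ there exist $A,B\in\mathrm{SGL}_n(\mathbb{F}_2)$ and linearly independent $\mathbf{x}_1,\ldots,\mathbf{x}_r$ with $B-A=\sum_{i=1}^r\mathbf{x}_i\mathbf{x}_i^{\top}$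 such that it is neither the case that $\mathbf{x}_i^{\top}A^{-1}\mathbf{x}_i=1$ for all $i$, nor the case that $[\mathbf{x}_i^{\top}A^{-1}\mathbf{x}_j]_{i,j=1}^r$ has rank one and trace zero.
   Context: $\mathbb{F}_2$ is the binary field; $\mathrm{SGL}_n(\mathbb{F}_2)$ denotes the set of invertible symmetric $n\times n$ matrices over $\mathbb{F}_2$. *)

From mathcomp Require Import all_boot all_order all_algebra.
Set Implicit Arguments. Unset Strict Implicit. Unset Printing Implicit Defensive.
Import GRing.Theory.
Local Open Scope ring_scope.

Notation F2 := 'F_2.

Definition SGL (n : nat) (A : 'M[F2]_n) : bool := (A^T == A) && (A \in unitmx).

Definition lin_indep (n r : nat) (x : 'I_r -> 'cV[F2]_n) : bool :=
  row_free (\matrix_(i < r) (x i)^T).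

Definition sum_outer (n r : nat) (x : 'I_r -> 'cV[F2]_n) : 'M[F2]_n :=
  \sum_(i < r) (x i *m (x i)^T).

Definition gram (n r : nat) (A : 'M[F2]_n) (x : 'I_r -> 'cV[F2]_n) : 'M[F2]_r :=
  \matrix_(i < r, j < r) ((x i)^T *m invmx A *m x j) 0 0.

Definition setting (n r : nat) (A B : 'M[F2]_n) (x : 'I_r -> 'cV[F2]_n) : Prop :=
  [/\ SGL A, SGL B, lin_indep x & B - A = sum_outer x].

(* Let Y be the r x n matrix with rows x_i^T and C = A^-1, so that the Gram
   matrix is G = Y C Y^T and B = A + Y^T Y.  By the matrix determinant lemma B is
   invertible iff 1 + G is, hence the Gram matrices that occur are exactly the
   G = Y C Y^T with C symmetric invertible, Y of full row rank and 1 + G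
   invertible; Sylvester's rank inequality then gives 2r <= n + rank G.
   The obstructions are: 1 + J is singular for odd r; 1 + G is symmetric with
   zero diagonal when diag G = 1, hence singular for odd r in characteristic 2
   (and zero when r = 2 and G has a zero entry); a rank-one trace-zero G forces
   2r <= n + 1.  The existence parts use rank-one matrices c c^T with c^T c = 0,
   realized in dimension 2r - 1, and block sums of small explicit symmetric G
   with G and 1 + G invertible. *)

From mathcomp Require Import all_boot all_order all_algebra fingroup perm.
From mathcomp Require Import zify.
Set Implicit Arguments. Unset Strict Implicit. Unset Printing Implicit Defensive.
Import GRing.Theory.
Local Open Scope ring_scope.

Lemma sum_involution_pchar2 (R : nzSemiRingType) (T : finType) (s : T -> T)
    (F : T -> R) :
  2%N \in [pchar R] -> involutive s -> (forall x, F (s x) = F x) ->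
  \sum_x F x = \sum_(x | s x == x) F x.
Proof.
move=> pcharR2 sK Fs; rewrite (bigID (fun x => s x == x)) /=.
suff -> : \sum_(x | s x != x) F x = 0 by rewrite addr0.
(* The non-fixed points come in pairs {x, s x}; enum_rank selects one of each. *)
rewrite (bigID (fun x => enum_rank x < enum_rank (s x))%N) /=.
set S := \sum_(x | _) _.
suff -> : \sum_(x | (s x != x) && ~~ (enum_rank x < enum_rank (s x))%N) F x = S
  by rewrite addrr_pchar2.
rewrite (reindex_inj (can_inj sK)) /=; apply: eq_big => x; last by rewrite Fs.
rewrite sK [s x == x]eq_sym; case: eqP => //= sx_neq.
have : enum_rank x != enum_rank (s x).
  by apply/eqP => /enum_rank_inj /sx_neq.
by rewrite neq_ltn; case: ltngtP.
Qed.

Lemma pchar2_F2 : 2%N \in [pchar F2].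
Proof. exact: pchar_Fp. Qed.

Lemma natr_F2 k : k%:R = (odd k)%:R :> F2.
Proof. by rewrite -(GRing.natr_mod_pchar pchar2_F2) modn2. Qed.

Lemma addmx_F2 m n (M : 'M[F2]_(m, n)) : M + M = 0.
Proof. by apply/matrixP => i j; rewrite !mxE (addrr_pchar2 pchar2_F2). Qed.

Lemma odd_card_involution_fixed (T : finType) (s : T -> T) :
  involutive s -> odd #|T| -> exists x, s x = x.
Proof.
move=> sK T_odd; case: (pickP (fun x => s x == x)) => [x /eqP | no_fixed].
  by exists x.
have := sum_involution_pchar2 (F := fun=> 1 : F2) pchar2_F2 sK (fun=> erefl).
by rewrite [X in _ = X]big_pred0 // sumr_const natr_F2 T_odd.
Qed.

Lemma det_sym_zero_diag_odd (R : comNzRingType) r (K : 'M[R]_r) :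
  2%N \in [pchar R] -> K^T = K -> (forall i, K i i = 0) -> odd r -> \det K = 0.
Proof.
move=> pcharR2 Ksym K0 r_odd.
(* The terms of p and p^-1 are equal, so only involutions p survive; each of
   them fixes some i because r is odd, and K i i = 0 kills its term. *)
rewrite /determinant.
rewrite (sum_involution_pchar2 (s := fun p : 'S_r => p^-1)%g _ pcharR2); last first.
- move=> p; rewrite odd_permV; congr (_ * _).
  rewrite (reindex_inj (@perm_inj _ p)) /=; apply: eq_bigr => i _.
  by rewrite permK -{1}Ksym mxE.
- exact: invgK.
apply: big1 => p /eqP pV.
have [i pi] : exists i, p i = i.
  apply: (odd_card_involution_fixed (s := p)); last by rewrite card_ord.
  by move=> i; rewrite -{1}pV permK.
by rewrite (bigD1 i) //= pi K0 mul0r mulr0.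
Qed.

Lemma sylvester_determinant (R : comPzRingType) m n (U : 'M[R]_(m, n))
    (V : 'M_(n, m)) :
  \det (1%:M + U *m V) = \det (1%:M + V *m U).
Proof.
pose L : 'M[R]_(m + n) := block_mx 1%:M U 0 1%:M.
pose M : 'M[R]_(m + n) := block_mx 1%:M (- U) V 1%:M.
have LM : L *m M = block_mx (1%:M + U *m V) 0 V 1%:M.
  by rewrite mulmx_block !mul1mx !mul0mx !mulmx1 addNr !add0r.
have ML : M *m L = block_mx 1%:M 0 V (1%:M + V *m U).
  by rewrite mulmx_block !mul1mx !mulmx1 !mulmx0 !addr0 subrr addrC.
have := congr1 determinant LM; rewrite det_mulmx mulrC -det_mulmx ML.
by rewrite !det_lblock !det1 mulr1 mul1r.
Qed.

Lemma matrix_determinant_lemma (R : comUnitRingType) n r (A : 'M[R]_n)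
    (U : 'M_(n, r)) (V : 'M_(r, n)) :
  A \in unitmx -> \det (A + U *m V) = \det A * \det (1%:M + V *m invmx A *m U).
Proof.
move=> Au; have -> : A + U *m V = A *m (1%:M + invmx A *m U *m V).
  by rewrite mulmxDr mulmx1 !mulmxA mulmxV ?mul1mx.
by rewrite det_mulmx sylvester_determinant mulmxA.
Qed.

Lemma trmxD (V : nmodType) m n (A B : 'M[V]_(m, n)) : (A + B)^T = A^T + B^T.
Proof. by apply/matrixP => i j; rewrite !mxE. Qed.

Lemma mul_const_mx (R : pzSemiRingType) m n p (a b : R) :
  (const_mx a : 'M_(m, n)) *m (const_mx b : 'M_(n, p)) = const_mx (a * b *+ n).
Proof.
apply/matrixP => i j; rewrite !mxE (eq_bigr (fun=> a * b)) => [|k _].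
  by rewrite sumr_const card_ord.
by rewrite !mxE.
Qed.

Lemma unitmx_update (R : comUnitRingType) n r (A : 'M[R]_n) (Y : 'M_(r, n)) :
  A \in unitmx ->
  (A + Y^T *m Y \in unitmx) = (1%:M + Y *m invmx A *m Y^T \in unitmx).
Proof.
move=> Au; rewrite !unitmxE matrix_determinant_lemma // unitrM.
by move: Au; rewrite unitmxE => ->.
Qed.

Definition rowsmx n r (x : 'I_r -> 'cV[F2]_n) : 'M[F2]_(r, n) :=
  \matrix_(i < r) (x i)^T.

Lemma sum_outerE n r (x : 'I_r -> 'cV[F2]_n) :
  sum_outer x = (rowsmx x)^T *m rowsmx x.
Proof.
apply/matrixP => a b; rewrite /sum_outer summxE !mxE; apply: eq_bigr => i _.
by rewrite !mxE big_ord1 !mxE.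
Qed.

Lemma gramE n r (A : 'M[F2]_n) (x : 'I_r -> 'cV[F2]_n) :
  gram A x = rowsmx x *m invmx A *m (rowsmx x)^T.
Proof.
apply/matrixP => i j; rewrite !mxE; apply: eq_bigr => l _; rewrite !mxE.
by congr (_ * _); apply: eq_bigr => k _; rewrite !mxE.
Qed.

Definition realizable n r (G : 'M[F2]_r) : Prop :=
  exists (A B : 'M[F2]_n) (x : 'I_r -> 'cV[F2]_n), setting A B x /\ gram A x = G.

Lemma setting_realizable n r (A B : 'M[F2]_n) (x : 'I_r -> 'cV[F2]_n) :
  setting A B x -> realizable n (gram A x).
Proof. by move=> hs; exists A, B, x. Qed.

Lemma realizableP n r (G : 'M[F2]_r) :
  realizable n G <->
  exists (C : 'M[F2]_n) (Y : 'M[F2]_(r, n)),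
    [/\ C^T = C, C \in unitmx, row_free Y, 1%:M + G \in unitmx
      & G = Y *m C *m Y^T].
Proof.
split=> [[A [B [x [[/andP[/eqP Asym Au] /andP[_ Bu] x_free BA] <-]]]] |].
  have BE : B = A + (rowsmx x)^T *m rowsmx x by rewrite -sum_outerE -BA addrC subrK.
  exists (invmx A), (rowsmx x); split; rewrite ?gramE ?unitmx_inv //.
    by rewrite trmx_inv Asym.
  by rewrite -unitmx_update // -BE.
case=> C [Y [Csym Cu Y_free G1u GE]]; subst G.
pose x i := (row i Y)^T.
have xY : rowsmx x = Y by apply/row_matrixP => i; rewrite rowK trmxK.
exists (invmx C), (invmx C + Y^T *m Y), x; split; last by rewrite gramE xY invmxK.
split.
- by rewrite /SGL trmx_inv Csym eqxx unitmx_inv.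
- have Bsym : (invmx C + Y^T *m Y)^T = invmx C + Y^T *m Y.
    by rewrite trmxD trmx_inv trmx_mul trmxK Csym.
  apply/andP; split; first by rewrite Bsym.
  by rewrite unitmx_update ?invmxK // unitmx_inv.
- by rewrite /lin_indep -/(rowsmx x) xY.
- by rewrite sum_outerE xY addrAC subrr add0r.
Qed.

Lemma realizable_necessary n r (G : 'M[F2]_r) : realizable n G ->
  [/\ G^T = G, 1%:M + G \in unitmx & (r + r <= n + \rank G)%N].
Proof.
case/realizableP=> C [Y [Csym Cu Y_free G1u GE]]; split => //; rewrite GE.
  by rewrite !trmx_mul trmxK Csym mulmxA.
have rkCY : \rank (C *m Y^T) = r.
  by rewrite -mxrank_tr trmx_mul trmxK Csym mxrankMfree ?row_free_unit ?(eqP Y_free).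
by have := mxrank_mul_min Y (C *m Y^T); rewrite mulmxA rkCY (eqP Y_free) leq_subLR.
Qed.

Lemma realizable_widen k n r (G : 'M[F2]_r) :
  (k <= n)%N -> realizable k G -> realizable n G.
Proof.
move=> le_kn; rewrite -(subnKC le_kn); move: (n - k)%N => m.
case/realizableP=> C [Y [Csym Cu Y_free G1u GE]]; apply/realizableP.
exists (block_mx C 0 0 1%:M), (row_mx Y 0); split => //.
- by rewrite tr_block_mx Csym !trmx0 trmx1.
- by rewrite unitmxE det_ublock det1 mulr1 -unitmxE.
- apply/row_freeP; have [Z YZ] := row_freeP Y_free.
  by exists (col_mx Z 0); rewrite mul_row_col mul0mx addr0.
- by rewrite GE mul_row_block !mulmx0 !mul0mx addr0 add0r tr_row_mx mul_row_col
    trmx0 mulmx0 addr0.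
Qed.

Definition sym_biunit r (M : 'M[F2]_r) : Prop :=
  [/\ M^T = M, M \in unitmx & 1%:M + M \in unitmx].

Lemma realizable_sym_biunit r (G : 'M[F2]_r) : sym_biunit G -> realizable r G.
Proof.
case=> Gsym Gu G1u; apply/realizableP; exists G, 1%:M.
by split; rewrite ?row_free_unit ?unitmx1 ?mul1mx ?trmx1 ?mulmx1.
Qed.

Lemma realizable_zero1 : realizable 2 (0 : 'M[F2]_1).
Proof.
apply/realizableP; exists 1%:M, (const_mx 1).
have Y_neq0 : (const_mx 1 : 'rV[F2]_2) != 0.
  by apply/eqP => /matrixP/(_ 0 0); rewrite !mxE.
split; rewrite ?trmx1 ?addr0 ?unitmx1 ?/row_free ?rank_rV ?Y_neq0 //.
rewrite mulmx1 trmx_const mul_const_mx; apply/matrixP => i j.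
by rewrite !mxE mulr1 mulr2n (addrr_pchar2 pchar2_F2).
Qed.

Lemma realizable_outer r (c : 'cV[F2]_(1 + r)) (c' : 'cV[F2]_r) :
  c = col_mx 1%:M c' -> c^T *m c = 0 -> realizable (1 + r + r) (c *m c^T).
Proof.
move=> cE cc; apply/realizableP.
(* The two copies of W cancel in Y Y^T, and Y has full rank since c starts with 1. *)
pose W : 'M[F2]_(1 + r, r) := col_mx 0 1%:M.
have cc_inv : (1%:M + c *m c^T) *m (1%:M + c *m c^T) = 1%:M.
  rewrite mulmxDr mulmx1 mulmxDl mul1mx -mulmxA (mulmxA c^T) cc mul0mx mulmx0.
  by rewrite addr0 -addrA addmx_F2 addr0.
exists 1%:M, (row_mx (row_mx c W) W); split; rewrite ?trmx1 ?unitmx1 //.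
- apply/row_freeP; exists (col_mx (col_mx (row_mx 1%:M 0) (row_mx c' 1%:M)) 0).
  rewrite !mul_row_col mulmx0 addr0 cE /W !mul_col_row !mul0mx !mul1mx mulmx1 mulmx0.
  by rewrite add_block_mx !add0r addr0 addmx_F2 -scalar_mx_block.
- exact: (mulmx1_unit cc_inv).1.
- by rewrite mulmx1 !tr_row_mx !mul_row_col -addrA addmx_F2 addr0.
Qed.

Lemma sym_biunit_block p q (P : 'M[F2]_p) (Q : 'M[F2]_q) :
  sym_biunit P -> sym_biunit Q -> sym_biunit (block_mx P 0 0 Q).
Proof.
case=> Psym Pu P1u [Qsym Qu Q1u]; split.
- by rewrite tr_block_mx Psym Qsym !trmx0.
- by rewrite unitmxE det_ublock unitrM -!unitmxE Pu Qu.
- rewrite [1%:M]scalar_mx_block add_block_mx !addr0.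
  by rewrite unitmxE det_ublock unitrM -!unitmxE P1u Q1u.
Qed.

Lemma block_mx_diag (V : nmodType) p q (P : 'M[V]_p) (Q : 'M[V]_q) a :
  (forall i, P i i = a) -> (forall i, Q i i = a) ->
  forall i, block_mx P 0 0 Q i i = a.
Proof.
move=> Pa Qa i; rewrite -(splitK i); case: (split i) => j /=.
  by rewrite block_mxEul.
by rewrite block_mxEdr.
Qed.

Lemma sym_biunit_of_inv r (M N N' : 'M[F2]_r) :
  M^T = M -> M *m N = 1%:M -> (1%:M + M) *m N' = 1%:M -> sym_biunit M.
Proof.
by move=> Msym /mulmx1_unit[Mu _] /mulmx1_unit[M1u _].
Qed.

Definition mx_of_seqs r (s : seq (seq nat)) : 'M[F2]_r :=
  \matrix_(i, j) (nth 0 (nth [::] s i) j)%:R.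

Ltac ord_cases :=
  let m := fresh "m" in let Hm := fresh "Hm" in
  case=> m Hm; do ![case: m Hm => [|m] Hm //].

Ltac mx_entrywise :=
  let i := fresh "i" in let j := fresh "j" in
  apply/matrixP => i j; rewrite !mxE ?big_ord_recl ?big_ord0 ?mxE;
  move: i j; ord_cases; ord_cases; by apply/eqP.

(* [Zk] has top-left entry 0 and [Uk] has unit diagonal. *)
Definition Z2 := mx_of_seqs 2 [:: [:: 0; 1]; [:: 1; 1]]%N.
Definition Z3 := mx_of_seqs 3 [:: [:: 0; 0; 1]; [:: 0; 1; 1]; [:: 1; 1; 0]]%N.
Definition U4 :=
  mx_of_seqs 4 [:: [:: 1; 0; 0; 1]; [:: 0; 1; 1; 0]; [:: 0; 1; 1; 1]; [:: 1; 0; 1; 1]]%N.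
Definition U6 := mx_of_seqs 6
  [:: [:: 1; 0; 0; 0; 0; 1]; [:: 0; 1; 0; 0; 1; 0]; [:: 0; 0; 1; 1; 0; 1];
      [:: 0; 0; 1; 1; 1; 0]; [:: 0; 1; 0; 1; 1; 0]; [:: 1; 0; 1; 0; 0; 1]]%N.

Lemma sym_biunit_Z2 : sym_biunit Z2.
Proof.
apply: (@sym_biunit_of_inv _ _ (mx_of_seqs 2 [:: [:: 1; 1]; [:: 1; 0]]%N)
  (mx_of_seqs 2 [:: [:: 0; 1]; [:: 1; 1]]%N)); mx_entrywise.
Qed.

Lemma sym_biunit_Z3 : sym_biunit Z3.
Proof.
apply: (@sym_biunit_of_inv _ _
  (mx_of_seqs 3 [:: [:: 1; 1; 1]; [:: 1; 1; 0]; [:: 1; 0; 0]]%N)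
  (mx_of_seqs 3 [:: [:: 1; 1; 0]; [:: 1; 0; 1]; [:: 0; 1; 0]]%N)); mx_entrywise.
Qed.

Lemma sym_biunit_U4 : sym_biunit U4.
Proof.
apply: (@sym_biunit_of_inv _ _
  (mx_of_seqs 4
     [:: [:: 1; 1; 1; 0]; [:: 1; 1; 0; 1]; [:: 1; 0; 0; 1]; [:: 0; 1; 1; 0]]%N)
  (mx_of_seqs 4
     [:: [:: 0; 1; 0; 1]; [:: 1; 0; 1; 0]; [:: 0; 1; 0; 0]; [:: 1; 0; 0; 0]]%N));
  mx_entrywise.
Qed.

Lemma sym_biunit_U6 : sym_biunit U6.
Proof.
apply: (@sym_biunit_of_inv _ _
  (mx_of_seqs 6
     [:: [:: 0; 1; 1; 0; 1; 1]; [:: 1; 0; 0; 1; 1; 1]; [:: 1; 0; 0; 0; 0; 1];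
         [:: 0; 1; 0; 0; 1; 0]; [:: 1; 1; 0; 1; 1; 1]; [:: 1; 1; 1; 0; 1; 1]]%N)
  (mx_of_seqs 6
     [:: [:: 0; 1; 0; 1; 0; 1]; [:: 1; 0; 1; 0; 1; 0]; [:: 0; 1; 0; 1; 0; 0];
         [:: 1; 0; 1; 0; 0; 0]; [:: 0; 1; 0; 0; 0; 0]; [:: 1; 0; 0; 0; 0; 0]]%N));
  mx_entrywise.
Qed.

Lemma U4_diag i : U4 i i = 1.
Proof. by rewrite mxE; move: i; ord_cases. Qed.

Lemma U6_diag i : U6 i i = 1.
Proof. by rewrite mxE; move: i; ord_cases. Qed.

Lemma zero_corner_family s : exists G : 'M[F2]_s.+2, sym_biunit G /\ G 0 0 = 0.
Proof.
elim/ltn_ind: s => -[|[|s]] IH.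
- by exists Z2; split; [exact: sym_biunit_Z2 | rewrite mxE].
- by exists Z3; split; [exact: sym_biunit_Z3 | rewrite mxE].
have [G [gG G00]] := IH s (leqW (leqnn _)).
exists (block_mx Z2 0 0 G); split; first exact: sym_biunit_block sym_biunit_Z2 gG.
have -> : (0 : 'I_(2 + s.+2)) = lshift s.+2 0 by apply: val_inj.
by rewrite (block_mxEul Z2 0 0 G) mxE.
Qed.

Lemma unit_diag_family s : ~~ odd s ->
  exists G : 'M[F2]_s.+4,
    [/\ sym_biunit G, forall i, G i i = 1 & exists i j, G i j = 0].
Proof.
(* No 2 x 2 matrix qualifies, so sizes grow by 4 from U4 and U6. *)
elim/ltn_ind: s => -[|[|[|[|s]]]] IH //=; rewrite ?negbK => s_even.
- by exists U4; split; [exact: sym_biunit_U4 | exact: U4_diag | exists 0, 1; rewrite mxE].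
- by exists U6; split; [exact: sym_biunit_U6 | exact: U6_diag | exists 0, 1; rewrite mxE].
have [G [gG Gdiag [i [j Gij]]]] := IH s ltac:(lia) s_even.
exists (block_mx U4 0 0 G); split.
- exact: sym_biunit_block sym_biunit_U4 gG.
- exact: block_mx_diag U4_diag Gdiag.
- by exists (rshift 4 i), (rshift 4 j); rewrite (block_mxEdr U4 0 0 G).
Qed.

Lemma gram_all_ones_spec n r : (1 <= r)%N ->
  (exists (A B : 'M[F2]_n) (x : 'I_r -> 'cV[F2]_n),
     setting A B x /\ (forall i j, gram A x i j = 1))
  <-> (~~ odd r /\ (r <= (n + 1)./2)%N).
Proof.
move=> r_gt0; rewrite geq_half_double -addnn.
split=> [[A [B [x [hs G1]]]] | [r_even le_rn]].
  pose J : 'M[F2]_r := const_mx 1.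
  have GJ : gram A x = J by apply/matrixP => i j; rewrite G1 mxE.
  have [_ J1u rkJ] := realizable_necessary (setting_realizable hs); rewrite GJ in J1u rkJ.
  split.
    apply/negP => r_odd.
    have JJ : J *m (1%:M + J) = 0.
      by rewrite mulmxDr mulmx1 mul_const_mx mulr1 natr_F2 r_odd addmx_F2.
    move/eqP: JJ; rewrite mulmx_free_eq0 ?row_free_unit //.
    by move=> /eqP/matrixP/(_ (Ordinal r_gt0) (Ordinal r_gt0)); rewrite !mxE.
  have rkJ1 : (\rank J <= 1)%N.
    have -> : J = (const_mx 1 : 'cV_r) *m (const_mx 1 : 'rV_r).
      by rewrite mul_const_mx mulr1.
    exact: leq_trans (mxrankM_maxl _ _) (rank_leq_col _).
  by apply: leq_trans rkJ _; rewrite leq_add2l.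
case: r r_gt0 r_even le_rn => // r _ r_even le_rn.
pose c : 'cV[F2]_(1 + r) := const_mx 1.
have cE : c = col_mx 1%:M (const_mx 1).
  by rewrite /c -col_mx_const; congr col_mx; apply/matrixP => i j; rewrite !ord1 !mxE.
have cc : c^T *m c = 0.
  by rewrite trmx_const mul_const_mx mulr1 natr_F2 (negbTE r_even).
have le_kn : (1 + r + r <= n)%N by lia.
have [A [B [x [hs Gc]]]] := realizable_widen le_kn (realizable_outer cE cc).
by exists A, B, x; split => // i j; rewrite Gc trmx_const mul_const_mx mxE mulr1.
Qed.

Lemma ord2_other (i j k : 'I_2) : j != i -> k != i -> j = k.
Proof.
by case: i j k => [[|[|//]] ?] [[|[|//]] ?] [[|[|//]] ?] //= *; apply: val_inj.
Qed.

Lemma gram_unit_diag_spec n r : (1 <= r)%N ->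
  (exists (A B : 'M[F2]_n) (x : 'I_r -> 'cV[F2]_n),
     [/\ setting A B x, (forall i, gram A x i i = 1) & exists i j, gram A x i j = 0])
  <-> [/\ (1 <= r <= n)%N, r <> 2%N & ~~ odd r].
Proof.
move=> r_gt0.
split=> [[A [B [x [hs G1 [i0 [j0 Gij0]]]]]] | [/andP[_ le_rn] r_neq2 r_even]].
  have [Gsym G1u rkG] := realizable_necessary (setting_realizable hs).
  move: (gram A x) Gsym G1u rkG G1 Gij0 => G Gsym G1u rkG G1 Gij0.
  have K0 i : (1%:M + G) i i = 0 by rewrite !mxE eqxx G1 (addrr_pchar2 pchar2_F2).
  split.
  - by rewrite r_gt0 /=; have := rank_leq_col G; lia.
  - move=> r2; subst r.
    have ij0 : j0 != i0 by apply/eqP => ji; move: Gij0; rewrite ji G1.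
    have row_i0 : row i0 (1%:M + G) = 0.
      apply/rowP => j; rewrite [RHS]mxE mxE.
      have [-> | ji0] := eqVneq j i0; first by rewrite K0.
      by rewrite (ord2_other ji0 ij0) !mxE eq_sym (negbTE ij0) add0r.
    move/eqP: row_i0; rewrite rowE mulmx_free_eq0 ?row_free_unit //.
    by move=> /eqP/matrixP/(_ 0 i0); rewrite !mxE !eqxx.
  - apply/negP => r_odd; move: G1u.
    rewrite unitmxE det_sym_zero_diag_odd ?unitr0 //.
    by rewrite trmxD trmx1 Gsym.
case: r r_gt0 r_neq2 r_even le_rn => [|[|[|[|s]]]] //= _ _.
rewrite ?negbK => s_even le_rn.
have [G [gG G1 [i [j Gij]]]] := unit_diag_family s_even.
have [A [B [x [hs GE]]]] := realizable_widen le_rn (realizable_sym_biunit gG).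
by exists A, B, x; rewrite GE; split; last exists i, j.
Qed.

Lemma gram_rank1_trace0_spec n r : (1 <= r)%N ->
  (exists (A B : 'M[F2]_n) (x : 'I_r -> 'cV[F2]_n),
     [/\ setting A B x, \rank (gram A x) = 1%N & \tr (gram A x) = 0])
  <-> (2 <= r <= (n + 1)./2)%N.
Proof.
move=> r_gt0; rewrite geq_half_double -addnn.
split=> [[A [B [x [hs rk1 tr0]]]] | /andP[r_ge2 le_rn]].
  have [_ _ rkG] := realizable_necessary (setting_realizable hs).
  rewrite rk1 in rkG; rewrite rkG andbT ltn_neqAle r_gt0 andbT.
  apply/eqP => r1; subst r.
  have G0 : gram A x = 0 by apply/matrixP => i j; rewrite !ord1 -trace_mx11 tr0 mxE.
  by move: rk1; rewrite G0 mxrank0.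
case: r r_gt0 r_ge2 le_rn => [|[|r]] // _ _ le_rn.
pose c : 'cV[F2]_(1 + r.+1) := col_mx 1%:M (delta_mx 0 0).
have cc : c^T *m c = 0.
  rewrite tr_col_mx mul_row_col trmx1 mulmx1 trmx_delta mul_delta_mx.
  have -> : delta_mx 0 0 = 1%:M :> 'M[F2]_1 by apply/matrixP => i j; rewrite !ord1 !mxE.
  exact: addmx_F2.
have le_kn : (1 + r.+1 + r.+1 <= n)%N by lia.
have [A [B [x [hs GE]]]] := realizable_widen le_kn (realizable_outer (erefl c) cc).
exists A, B, x; rewrite GE; split => //.
  apply/eqP; rewrite eqn_leq (leq_trans (mxrankM_maxl _ _) (rank_leq_col _)) /=.
  rewrite lt0n mxrank_eq0; apply/eqP.
  move=> /matrixP/(_ (@lshift 1 r.+1 0) (@lshift 1 r.+1 0)).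
  by rewrite mxE big_ord1 [c^T _ _]mxE /c col_mxEu !mxE.
by rewrite mxtrace_mulC cc mxtrace0.
Qed.

Lemma gram_neither_exists n r : (2 <= n)%N -> (1 <= r)%N -> (r <= n)%N ->
  exists (A B : 'M[F2]_n) (x : 'I_r -> 'cV[F2]_n),
    [/\ setting A B x, ~ (forall i, gram A x i i = 1)
      & ~ (\rank (gram A x) = 1%N /\ \tr (gram A x) = 0)].
Proof.
move=> n_ge2; case: r => [|[|s]] // _ le_rn.
  have [A [B [x [hs GE]]]] := realizable_widen n_ge2 realizable_zero1.
  exists A, B, x; rewrite GE; split => // [/(_ 0) | []].
    by rewrite mxE.
  by rewrite mxrank0.
have [G [gG G00]] := zero_corner_family s.
have [A [B [x [hs GE]]]] := realizable_widen le_rn (realizable_sym_biunit gG).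
exists A, B, x; rewrite GE; split => // [/(_ 0) | []].
  by rewrite G00.
by case: gG => _ Gu _; rewrite (mxrank_unit Gu).
Qed.

Unset Implicit Arguments.

Theorem lemma7p1 (n r : nat) (hn : (2 <= n)%N) (hr : (1 <= r)%N) :
  [/\
   (* (i) *)
   (exists (A B : 'M[F2]_n) (x : 'I_r -> 'cV[F2]_n),
      setting A B x /\ (forall i j, gram A x i j = 1))
   <-> (~~ odd r /\ (r <= (n + 1)./2)%N),
   (* (ii) *)
   (exists (A B : 'M[F2]_n) (x : 'I_r -> 'cV[F2]_n),
      [/\ setting A B x, (forall i, gram A x i i = 1)
        & exists i j, gram A x i j = 0])
   <-> [/\ (1 <= r <= n)%N, r <> 2%N & ~~ odd r],
   (* (iii) *)
   (exists (A B : 'M[F2]_n) (x : 'I_r -> 'cV[F2]_n),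
      [/\ setting A B x, \rank (gram A x) = 1%N & \tr (gram A x) = 0])
   <-> (2 <= r <= (n + 1)./2)%N
  &
   (* (iv) *)
   ((r <= n)%N ->
    exists (A B : 'M[F2]_n) (x : 'I_r -> 'cV[F2]_n),
      [/\ setting A B x,
          ~ (forall i, gram A x i i = 1)
        & ~ (\rank (gram A x) = 1%N /\ \tr (gram A x) = 0)])].
Proof.
split.
- exact: gram_all_ones_spec.
- exact: gram_unit_diag_spec.
- exact: gram_rank1_trace0_spec.
- exact: gram_neither_exists.
Qed.
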